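(* Let $Q$ be a real-valued $\Gamma$-periodic potential on a $\Gamma$-periodic graph $\mathcal G$. (i) If $\sigma(A(0)+Q)=\sigma(A(0))$ and the fundamental graph $\mathcal G_*$ has no loops, then $Q\equiv0$. (ii) If $\sigma(A(0)+Q)=\sigma(A(0)-\varkappa)$, where $\varkappa$ is the degree potential $\varkappa(v)=\varkappa_v$, then $Q\equiv-\varkappa$.
   Context: Let $\Gamma$ be a lattice of rank $d$ in $\mathbb R^d$ with basis $\mathfrak a_1,\dots,\mathfrak a_d$ and fundamental cell $\Omega=\{\sum_s x_s\mathfrak a_s: x_s\in[0,1)\}$. A $\Gamma$-periodic graph $\mathcal G=(\mathcal V,\mathcal E)$ is a connected, locally finite graph embedded in $\mathbb R^d$, invariant under translation by $\Gamma$, with finite quotient; $\mathcal G$ has no loops, multiple edges are allowed. Edges are counted with both orientations ($\mathcal A$ the oriented edges). The fundamental graph $\mathcal G_*=(\mathcal V_*,\mathcal A_* )=\mathcal G/\Gamma$ (may have loops, multiple edges); $\varkappa_v$ is the number of oriented edges starting at $v$. Every vertex is uniquely $v=v_0+[v]$ with $v_0\in\Omega$, $[v]\in\Gamma$; for $\mathbf e=(u,v)$, $\tau(\mathbf e)=[v]_{\mathbb A}-[u]_{\mathbb A}\in\mathbb Z^d$ (coordinates in the basis), well defined on $\mathcal A_*$. A potential is $Q:\mathcal V_*\to\mathbb R$. $A(0)$ is the operator on $\ell^2(\mathcal V_* )$ with $(A(0)f)(v)=\sum_{\mathbf e=(v,u)\in\mathcal A_*}f(u)$ (more generally $A(k)$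 with factors $e^{i\langle\tau(\mathbf e),k\rangle}$); $Q$, $\varkappa$ act by multiplication. $\sigma(\cdot)$ is the spectrum (eigenvalues with multiplicities). *)

From mathcomp Require Import all_boot all_order all_algebra.
From mathcomp Require Import reals.
Set Implicit Arguments. Unset Strict Implicit. Unset Printing Implicit Defensive.
Import Order.TTheory GRing.Theory Num.Theory.
Local Open Scope ring_scope.

(* A Gamma-periodic graph G (lattice of rank d) is encoded by its fundamental
   graph G_* = G / Gamma with vertex set 'I_n, the finite type E of oriented
   edges of G_*, source/target maps, edge reversal, and the index
   tau(e) = [v]_A - [u]_A in Z^d (row vector of length d). The periodic graph
   is recovered as vertices (v, a), v : 'I_n, a : Z^d, with an oriented edge
   (src e, a) -> (tgt e, a + tau e) for each e and a. *)

Fixpoint is_walk n (E : Type) (src tgt : E -> 'I_n) (v w : 'I_n) (p : seq E)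
  : bool :=
  match p with
  | [::] => v == w
  | e :: p' => (src e == v) && is_walk src tgt (tgt e) w p'
  end.

Definition periodic_graph_data d n (E : finType) (src tgt : E -> 'I_n)
  (rev : E -> E) (tau : E -> 'rV[int]_d) : Prop :=
  (* every edge is counted with both orientations *)
  (forall e, rev (rev e) = e) /\
  (forall e, rev e != e) /\
  (forall e, src (rev e) = tgt e /\ tgt (rev e) = src e) /\
  (forall e, tau (rev e) = - tau e) /\
  (* the periodic graph G has no loops: an edge of G_* joining v to itself
     lifts to an edge (v,a) -> (v, a + tau e), which is a loop iff tau e = 0 *)
  (forall e, src e = tgt e -> tau e != 0) /\
  (* the periodic graph G is connected: (v,0) is joined to (w,a) *)
  (forall (v w : 'I_n) (a : 'rV[int]_d),
     exists p : seq E, is_walk src tgt v w p /\ \sum_(e <- p) tau e = a).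

Definition A0 (R : nzRingType) n (E : finType) (src tgt : E -> 'I_n)
  : 'M[R]_n :=
  \matrix_(i, j) (#|[set e : E | (src e == i) && (tgt e == j)]|)%:R.

Definition kappa n (E : finType) (src : E -> 'I_n) (v : 'I_n) : nat :=
  #|[set e : E | src e == v]|.

Definition pot_mx (R : nzRingType) n (Q : 'I_n -> R) : 'M[R]_n :=
  diag_mx (\row_i Q i).

(* multiplicity of x as an eigenvalue of M (as a root of the characteristic
   polynomial); sigma(M) = sigma(N) with multiplicities means these agree *)
Definition eig_mult (R : realType) n (M : 'M[R]_n) (x : R) : nat :=
  mup x (char_poly M).

Definition same_spectrum (R : realType) n (M N : 'M[R]_n) : Prop :=
  forall x : R, eig_mult M x = eig_mult N x.

From mathcomp Require Import all_boot all_order all_algebra.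
From mathcomp Require Import reals complex ring.
Set Implicit Arguments.
Unset Strict Implicit.
Unset Printing Implicit Defensive.
Import Order.TTheory GRing.Theory Num.Theory.
Local Open Scope ring_scope.
Local Open Scope sesquilinear_scope.

(* Both matrices compared in each part are real symmetric, so equal spectra
   give equal traces of M and M^2 and transfer the sign of the eigenvalues.
   (i) Without loops A(0) has zero diagonal, so
   tr (A(0) + Q)^2 = tr A(0)^2 + sum_v Q_v^2, which forces Q = 0.
   (ii) The hermitian form of A(0) - kappa is
   -1/2 sum_e |u(src e) - u(tgt e)|^2 <= 0, hence M = A(0) + Q is negative
   semidefinite as well.  Equal traces give sum_v (kappa_v + Q_v) = 0, i.e. the
   form of M vanishes at the constant vector 1; for a negative semidefinite
   matrix this forces 1 M = 0, and the column sums of M are kappa_v + Q_v. *)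

Lemma char_poly_similar (F : fieldType) n (P Q A : 'M[F]_n) :
  Q *m P = 1%:M -> char_poly (Q *m A *m P) = char_poly A.
Proof.
move=> QP; have QPX : map_mx polyC Q *m map_mx polyC P = 1%:M.
  by rewrite -map_mxM QP map_mx1.
rewrite /char_poly; have -> : char_poly_mx (Q *m A *m P) =
          map_mx polyC Q *m char_poly_mx A *m map_mx polyC P.
  rewrite /char_poly_mx mulmxBr mulmxBl !map_mxM; congr (_ - _).
  by rewrite scalar_mxC -mulmxA QPX mulmx1.
by rewrite !det_mulmx mulrAC -det_mulmx QPX det1 mul1r.
Qed.

Section HermitianForm.
Variables (C : numClosedFieldType) (n : nat).

Definition hform (A : 'M[C]_n) (u : 'rV[C]_n) : C := (u *m A *m u ^t*) 0 0.

Lemma hformE A u : hform A u = \sum_i \sum_j u 0 i * A i j * (u 0 j)^*.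
Proof.
rewrite /hform mxE exchange_big; apply: eq_bigr => j _.
by rewrite !mxE mulr_suml.
Qed.

Lemma hform_diag (d : 'rV[C]_n) u :
  hform (diag_mx d) u = \sum_i d 0 i * `|u 0 i| ^+ 2.
Proof.
rewrite /hform mxE; apply: eq_bigr => i _.
by rewrite mul_mx_diag !mxE normCK; ring.
Qed.

Lemma hform_conj (P A : 'M[C]_n) u :
  hform (P ^t* *m A *m P) u = hform A (u *m P ^t*).
Proof. by rewrite /hform trmx_mul map_mxM trmxCK !mulmxA. Qed.

End HermitianForm.

Section RealSymmetric.
Variables (R : rcfType) (n : nat).
Local Notation C := R[i].
Local Notation rc := (real_complex R).
Local Notation cmx := (map_mx rc).

(* Negative semidefiniteness is tested on complex vectors, which is
   equivalent for real symmetric matrices but fits the spectral theorem. *)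
Definition nsdmx (M : 'M[R]_n) : Prop := forall u, hform (cmx M) u <= 0.

Lemma sym_spectral (M : 'M[R]_n) : M^T = M ->
  exists P (d : 'rV[R]_n),
    P \is unitarymx /\ cmx M = P ^t* *m diag_mx (cmx d) *m P.
Proof.
move=> M_sym; have M_herm : cmx M \is hermsymmx.
  apply: realsym_hermsym.
    apply/is_hermitianmxP; rewrite expr0 scale1r map_mx_id //.
    by rewrite -{2}M_sym map_trmx trmxK.
  by apply/mxOverP => i j; rewrite mxE /= complex_real.
have /hermitian_normalmx /orthomx_spectralP M_spectral := M_herm.
have /mxOverP d_real := hermitian_spectral_diag_real M_herm.
exists (spectralmx (cmx M)),
       (map_mx (@complex.Re R) (spectral_diag (cmx M))).
split; first exact: spectral_unitarymx.
rewrite -invmx_unitary ?spectral_unitarymx // {1}M_spectral.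
congr (_ *m diag_mx _ *m _); apply/matrixP => i j; rewrite !mxE.
by move: (d_real i j); case: (spectral_diag _ i j) => a b /=;
   rewrite complex_real => /eqP ->.
Qed.

Lemma hform_cmx_const1 (M : 'M[R]_n) :
  hform (cmx M) (const_mx 1) = rc (\sum_i \sum_j M i j).
Proof.
rewrite hformE rmorph_sum; apply: eq_bigr => i _; rewrite rmorph_sum.
by apply: eq_bigr => j _; rewrite !mxE conjC1 mul1r mulr1.
Qed.

Lemma const1_mul_cmx (M : 'M[R]_n) j :
  ((const_mx 1 : 'rV[C]_n) *m cmx M) 0 j = rc (\sum_i M i j).
Proof.
by rewrite mxE rmorph_sum; apply: eq_bigr => i _; rewrite !mxE mul1r.
Qed.

Section Spectral.
Variables (M : 'M[R]_n) (P : 'M[C]_n) (d : 'rV[R]_n).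
Hypotheses (P_unitary : P \is unitarymx)
           (M_spectral : cmx M = P ^t* *m diag_mx (cmx d) *m P).

Let PPt : P *m P ^t* = 1%:M. Proof. exact/unitarymxP. Qed.

Lemma char_poly_spectral : char_poly M = \prod_i ('X - (d 0 i)%:P).
Proof.
apply: (map_poly_inj rc).
rewrite map_char_poly M_spectral char_poly_similar ?(mulmx1C PPt) //.
rewrite char_poly_trig ?diag_mx_is_trig // map_prod_XsubC.
by apply: eq_bigr => i _; rewrite !mxE eqxx mulr1n.
Qed.

Lemma mxtrace_spectral : \tr M = \sum_i d 0 i.
Proof.
apply: (@complexI R); rewrite -trace_map_mx M_spectral mxtrace_mulC mulmxA.
rewrite PPt mul1mx mxtrace_diag rmorph_sum.
by apply: eq_bigr => i _; rewrite mxE.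
Qed.

Lemma mxtrace_sqr_spectral : \tr (M *m M) = \sum_i d 0 i ^+ 2.
Proof.
apply: (@complexI R); rewrite -trace_map_mx map_mxM M_spectral.
rewrite -!mulmxA mxtrace_mulC -!mulmxA [P *m (P ^t* *m _)]mulmxA PPt.
rewrite mul1mx mulmx1 /mxtrace rmorph_sum; apply: eq_bigr => i _.
by rewrite mul_diag_mx !mxE eqxx mulr1n rmorphXn expr2.
Qed.

Lemma hform_spectral u :
  hform (cmx M) u = \sum_i rc (d 0 i) * `|(u *m P ^t*) 0 i| ^+ 2.
Proof.
rewrite M_spectral hform_conj hform_diag.
by apply: eq_bigr => i _; rewrite mxE.
Qed.

Lemma nsdmx_spectral : nsdmx M <-> forall i, d 0 i <= 0.
Proof.
split=> [M_nsd i | d_le0 u].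
  have := M_nsd (row i P); rewrite hform_spectral -row_mul PPt row1.
  rewrite (bigD1 i) //= big1 => [|j ji]; last first.
    by rewrite !mxE (negbTE ji) normr0 expr0n mulr0.
  by rewrite addr0 !mxE !eqxx normr1 expr1n mulr1 -(lecR _ 0).
rewrite hform_spectral; apply: sumr_le0 => i _.
by rewrite mulr_le0_ge0 ?exprn_ge0 // (lecR _ 0).
Qed.

Lemma nsdmx_hform_eq0 u : nsdmx M -> hform (cmx M) u = 0 -> u *m cmx M = 0.
Proof.
move=> /nsdmx_spectral d_le0; rewrite hform_spectral.
have term_le0 i : rc (d 0 i) * `|(u *m P ^t*) 0 i| ^+ 2 <= 0.
  by rewrite mulr_le0_ge0 ?exprn_ge0 // (lecR _ 0).
move=> /eqP; rewrite -oppr_eq0 -sumrN => /eqP /psumr_eq0P term_eq0.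
have {}term_eq0 i : rc (d 0 i) * `|(u *m P ^t*) 0 i| ^+ 2 = 0.
  by apply/oppr_inj; rewrite oppr0 term_eq0 // => j _; rewrite oppr_ge0.
rewrite M_spectral !mulmxA; set w := u *m P ^t* in term_eq0 *; clearbody w.
apply/matrixP => i j; rewrite !mxE big1 // => k _; rewrite mul_mx_diag !mxE.
have /eqP := term_eq0 k; rewrite mulf_eq0 expf_eq0 normr_eq0 /= ord1.
by case/orP=> /eqP ->; rewrite ?mulr0 ?mul0r.
Qed.

End Spectral.

Lemma sym_nsdmx_hform_eq0 (M : 'M[R]_n) u : M^T = M -> nsdmx M ->
  hform (cmx M) u = 0 -> u *m cmx M = 0.
Proof.
by move=> /sym_spectral [P [d [PU Me]]]; apply: (nsdmx_hform_eq0 PU Me).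
Qed.

End RealSymmetric.

Section SameSpectrum.
Variables (R : realType) (n : nat).
Local Notation eigenseq d := [seq d 0 i | i in 'I_n].

Lemma big_eigenseq {T : Type} {idx : T} {op : Monoid.com_law idx}
    (d : 'rV[R]_n) (F : R -> T) :
  \big[op/idx]_i F (d 0 i) = \big[op/idx]_(x <- eigenseq d) F x.
Proof. by rewrite big_image. Qed.

Lemma same_spectrum_perm_eq (M N : 'M[R]_n) (dM dN : 'rV[R]_n) :
  char_poly M = \prod_i ('X - (dM 0 i)%:P) ->
  char_poly N = \prod_i ('X - (dN 0 i)%:P) ->
  same_spectrum M N -> perm_eq (eigenseq dM) (eigenseq dN).
Proof.
move=> charM charN sp; apply/allP => x _ /=; apply/eqP.
have := sp x; rewrite /eig_mult charM charN.
by rewrite !(big_eigenseq _ (fun x => 'X - x%:P)) !mu_prod_XsubC.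
Qed.

Section Symmetric.
Variables M N : 'M[R]_n.
Hypotheses (M_sym : M^T = M) (N_sym : N^T = N) (MN : same_spectrum M N).

Lemma same_spectrum_mxtrace : \tr M = \tr N.
Proof.
have [P [dM [PU Me]]] := sym_spectral M_sym.
have [P' [dN [PU' Ne]]] := sym_spectral N_sym.
have := same_spectrum_perm_eq (char_poly_spectral PU Me)
                              (char_poly_spectral PU' Ne) MN.
rewrite (mxtrace_spectral PU Me) (mxtrace_spectral PU' Ne).
move=> eig_perm.
by rewrite !(big_eigenseq _ (fun x => x)) (perm_big _ eig_perm).
Qed.

Lemma same_spectrum_mxtrace_sqr : \tr (M *m M) = \tr (N *m N).
Proof.
have [P [dM [PU Me]]] := sym_spectral M_sym.
have [P' [dN [PU' Ne]]] := sym_spectral N_sym.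
have := same_spectrum_perm_eq (char_poly_spectral PU Me)
                              (char_poly_spectral PU' Ne) MN.
rewrite (mxtrace_sqr_spectral PU Me) (mxtrace_sqr_spectral PU' Ne).
move=> eig_perm.
by rewrite !(big_eigenseq _ (fun x => x ^+ 2)) (perm_big _ eig_perm).
Qed.

Lemma same_spectrum_nsdmx : nsdmx N -> nsdmx M.
Proof.
have [P [dM [PU Me]]] := sym_spectral M_sym.
have [P' [dN [PU' Ne]]] := sym_spectral N_sym.
have := same_spectrum_perm_eq (char_poly_spectral PU Me)
                              (char_poly_spectral PU' Ne) MN.
move=> /perm_mem eig_eq /(nsdmx_spectral PU' Ne) dN_le0.
apply/(nsdmx_spectral PU Me) => i.
have : dM 0 i \in eigenseq dN by rewrite -eig_eq; apply: image_f.
by case/imageP => j _ ->.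
Qed.

End Symmetric.
End SameSpectrum.

Section Potential.
Variables (K : nzRingType) (n : nat).
Implicit Types (A : 'M[K]_n) (Q : 'I_n -> K).

Lemma pot_mxE Q i j : pot_mx Q i j = Q i *+ (i == j).
Proof. by rewrite !mxE. Qed.

Lemma tr_pot_mx Q : (pot_mx Q)^T = pot_mx Q.
Proof. exact: tr_diag_mx. Qed.

Lemma mxtrace_pot_mx Q : \tr (pot_mx Q) = \sum_i Q i.
Proof. by rewrite mxtrace_diag; apply: eq_bigr => i _; rewrite mxE. Qed.

Lemma sum_col_add_pot_mx A Q j :
  \sum_i (A + pot_mx Q) i j = \sum_i A i j + Q j.
Proof.
under eq_bigr => i _ do rewrite mxE pot_mxE.
rewrite big_split /=; congr (_ + _).
rewrite (bigD1 j) //= eqxx mulr1n big1 ?addr0 // => i ij.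
by rewrite (negbTE ij) mulr0n.
Qed.

Lemma mxtrace_sqr_add_pot_mx A Q : (forall i, A i i = 0) ->
  \tr ((A + pot_mx Q) *m (A + pot_mx Q)) = \tr (A *m A) + \sum_i Q i ^+ 2.
Proof.
move=> A_diag0; rewrite mulmxDl !mulmxDr !mxtraceD -addrA; congr (_ + _).
rewrite /pot_mx mul_mx_diag mul_diag_mx mulmx_diag !mxtrace_diag.
rewrite /mxtrace -!big_split /=; apply: eq_bigr => i _.
by rewrite !mxE A_diag0 !mulr0 mul0r !add0r.
Qed.

End Potential.

Section FundamentalGraph.
Variables (n : nat) (E : finType) (src tgt : E -> 'I_n).
Local Notation L K := (A0 K src tgt - pot_mx (fun v => (kappa src v)%:R)).

Lemma sum_A0 (K : nzRingType) (f : 'I_n -> 'I_n -> K) :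
  \sum_i \sum_j f i j * A0 K src tgt i j = \sum_e f (src e) (tgt e).
Proof.
rewrite pair_big (partition_big (fun e => (src e, tgt e)) predT) //=.
apply: eq_bigr => [[i j]] _; rewrite mxE mulr_natr -sumr_const.
by apply: eq_big => [e|e]; rewrite inE ?xpair_eqE // => /andP [/eqP <- /eqP <-].
Qed.

Lemma sum_kappa (K : nzRingType) (g : 'I_n -> K) :
  \sum_i g i *+ kappa src i = \sum_e g (src e).
Proof.
rewrite (partition_big src predT) //=; apply: eq_bigr => i _.
by rewrite -sumr_const; apply: eq_big => [e|e]; rewrite inE // => /eqP <-.
Qed.

Lemma A0_diag_eq0 (K : nzRingType) i :
  (forall e, src e != tgt e) -> A0 K src tgt i i = 0.
Proof.
move=> no_loop; rewrite mxE (_ : [set e | _] = set0) ?cards0 //.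
apply/setP => e; rewrite !inE; apply/negbTE.
by apply: contraNN (no_loop e) => /andP [/eqP -> /eqP ->].
Qed.

Variable rev : E -> E.
Hypotheses (revK : involutive rev)
           (src_tgt_rev : forall e, src (rev e) = tgt e /\ tgt (rev e) = src e).

Lemma sum_rev (K : nmodType) (F : E -> K) : \sum_e F (rev e) = \sum_e F e.
Proof. by rewrite [RHS](reindex_inj (inv_inj revK)). Qed.

Lemma tr_A0 (K : nzRingType) : (A0 K src tgt)^T = A0 K src tgt.
Proof.
apply/matrixP => i j; rewrite !mxE -!sum1_card (reindex_inj (inv_inj revK)).
apply: congr1; apply: eq_bigl => e; rewrite !inE.
by have [-> ->] := src_tgt_rev e; rewrite andbC.
Qed.

Lemma sum_col_A0 (K : nzRingType) j :
  \sum_i A0 K src tgt i j = (kappa src j)%:R.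
Proof.
transitivity (\sum_i \sum_j' (j' == j)%:R * A0 K src tgt i j').
  apply: eq_bigr => i _; rewrite (bigD1 j) //= eqxx mul1r big1 ?addr0 //.
  by move=> j' /negbTE ->; rewrite mul0r.
rewrite sum_A0 -sum_rev.
under eq_bigr => e _ do rewrite (proj2 (src_tgt_rev e)).
rewrite -(sum_kappa (fun i => (i == j)%:R)) (bigD1 j) //= eqxx big1 ?addr0 //.
by move=> i /negbTE ->; rewrite mul0rn.
Qed.

Lemma hform_laplacian (R : rcfType) (u : 'rV[R[i]]_n) :
  hform (map_mx (real_complex R) (L R)) u *+ 2 =
  - \sum_e `|u 0 (src e) - u 0 (tgt e)| ^+ 2.
Proof.
set x := fun i j => u 0 i * (u 0 j)^*.
transitivity ((\sum_i \sum_j x i j * A0 _ src tgt i j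
               - \sum_i x i i *+ kappa src i) *+ 2).
  rewrite hformE -sumrB; congr (_ *+ 2); apply: eq_bigr => i _.
  rewrite (bigD1 i) //= [in RHS](bigD1 i) //= addrAC; congr (_ + _).
    by rewrite !mxE eqxx rmorphB rmorph_nat /= rmorphMn rmorph_nat /x; ring.
  apply: eq_bigr => j /negbTE ji; rewrite !mxE eq_sym ji rmorphB rmorph_nat /=.
  by rewrite rmorphMn /= mulr0n subr0 /x; ring.
rewrite sum_A0 sum_kappa.
have norm_sub e : `|u 0 (src e) - u 0 (tgt e)| ^+ 2 =
    x (src e) (src e) + x (tgt e) (tgt e)
    - (x (src e) (tgt e) + x (tgt e) (src e)).
  by rewrite normCK rmorphB /x; ring.
have sum_rev_x (F : 'I_n -> 'I_n -> R[i]) :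
    \sum_e F (tgt e) (src e) = \sum_e F (src e) (tgt e).
  by rewrite -sum_rev; apply: eq_bigr => e _; have [-> ->] := src_tgt_rev e.
have sum_rev_diag : \sum_e x (tgt e) (tgt e) = \sum_e x (src e) (src e).
  by rewrite -sum_rev; apply: eq_bigr => e _; have [_ ->] := src_tgt_rev e.
rewrite (eq_bigr _ (fun e _ => norm_sub e)) sumrB !big_split /=.
by rewrite sum_rev_x sum_rev_diag mulr2n; ring.
Qed.

Lemma laplacian_nsdmx (R : rcfType) : nsdmx (L R).
Proof.
move=> u; rewrite -(pmulrn_lle0 _ (isT : (0 < 2)%N)) hform_laplacian oppr_le0.
by apply: sumr_ge0 => e _; rewrite exprn_ge0.
Qed.

End FundamentalGraph.

Theorem proposition2p13 (R : realType) (d n : nat) (E : finType)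
  (src tgt : E -> 'I_n) (rev : E -> E) (tau : E -> 'rV[int]_d)
  (Q : 'I_n -> R) :
  periodic_graph_data src tgt rev tau ->
  (* (i) *)
  (same_spectrum (A0 R src tgt + pot_mx Q) (A0 R src tgt) ->
   (forall e, src e != tgt e) ->
   forall v, Q v = 0) /\
  (* (ii) *)
  (same_spectrum (A0 R src tgt + pot_mx Q)
                 (A0 R src tgt - pot_mx (fun v => (kappa src v)%:R)) ->
   forall v, Q v = - (kappa src v)%:R).
Proof.
move=> [revK [_ [src_tgt_rev _]]].
set A := A0 R src tgt; set deg := fun v => (kappa src v)%:R : R.
have A_sym : A^T = A := tr_A0 revK src_tgt_rev R.
have M_sym (P : 'I_n -> R) : (A + pot_mx P)^T = A + pot_mx P.
  by rewrite raddfD /= A_sym tr_pot_mx.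
have L_sym : (A - pot_mx deg)^T = A - pot_mx deg.
  by rewrite raddfB /= A_sym tr_pot_mx.
split=> [AQ_A no_loop v | AQ_L v].
- have := same_spectrum_mxtrace_sqr (M_sym Q) A_sym AQ_A.
  rewrite mxtrace_sqr_add_pot_mx => [/eqP|i]; last exact: A0_diag_eq0.
  rewrite -subr_eq0 addrC addKr => /eqP /psumr_eq0P Q2_eq0.
  by apply/eqP; rewrite -sqrf_eq0 Q2_eq0 // => i _; rewrite sqr_ge0.
- have := same_spectrum_mxtrace (M_sym Q) L_sym AQ_L.
  rewrite raddfD raddfB /= !mxtrace_pot_mx => /addrI sumQ.
  have L_nsd : nsdmx (A - pot_mx deg) by apply: laplacian_nsdmx.
  have M_nsd := same_spectrum_nsdmx (M_sym Q) L_sym AQ_L L_nsd.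
  have col_sum j : \sum_i (A + pot_mx Q) i j = deg j + Q j.
    by rewrite sum_col_add_pot_mx (sum_col_A0 revK src_tgt_rev).
  have form0 : hform (map_mx (real_complex R) (A + pot_mx Q)) (const_mx 1) = 0.
    rewrite hform_cmx_const1 exchange_big /=.
    under eq_bigr => j _ do rewrite col_sum.
    by rewrite big_split /= sumQ subrr rmorph0.
  have /rowP /(_ v) := sym_nsdmx_hform_eq0 (M_sym Q) M_nsd form0.
  rewrite const1_mul_cmx col_sum mxE => /(@complexI R) /eqP.
  by rewrite addrC addr_eq0 => /eqP.
Qed.
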